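(* Let $\mathcal{C}_1,\mathcal{C}_2,\mathcal{C}_3$ be pairwise disjoint maximal commuting classes of two-qubit Pauli operators ($d=4$), and suppose there is a maximal commuting class $\mathcal{S}$ consisting of one element from each of $\mathcal{C}_1$, $\mathcal{C}_2$, $\mathcal{C}_3$. Let $\mathcal{B}_i$ be the common eigenbasis of $\mathcal{C}_i$. Then every common eigenstate $|\psi\rangle$ of the operators in $\mathcal{S}$ saturates the uncertainty relation $\frac13\sum_{i=1}^3 H_2(\mathcal{B}_i\,\|\,|\psi\rangle)\ge 1$, i.e. $\frac13\sum_{i=1}^3 H_2(\mathcal{B}_i\,\|\,|\psi\rangle)= 1$.
   Context: Two-qubit Pauli operators are the tensor products $P_1\otimes P_2$ with $P_k\in\{I,X,Y,Z\}$. A maximal commuting class in $d=4$ is a set of $3$ mutually commuting non-identity two-qubit Pauli operators; its common eigenbasis is an orthonormal basis of $\mathbb{C}^4$. For an orthonormal basis $\mathcal{B}=\{|b^{(j)}\rangle\}_{j=1}^d$ and a unit vector $|\psi\rangle$, the collision entropy is $H_2(\mathcal{B}\,\|\,|\psi\rangle)=-\log_2\sum_{j=1}^d|\langle b^{(j)}|\psi\rangle|^4$. *)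

From HB Require Import structures.
From mathcomp Require Import all_boot all_order all_algebra.
From mathcomp Require Import reals exp.
From mathcomp Require Import complex mxtens.
Set Implicit Arguments. Unset Strict Implicit. Unset Printing Implicit Defensive.
Import Order.TTheory GRing.Theory Num.Theory.
Local Open Scope ring_scope.

Section Defs.
Variable R : realType.
Local Notation C := (complex R).

(* single-qubit Paulis, indexed 0 = I, 1 = X, 2 = Y, 3 = Z *)
Definition pauli1 (k : 'I_4) : 'M[C]_2 :=
  \matrix_(i < 2, j < 2)
    match val k with
    | 0 => if i == j then 1 else 0
    | 1 => if i == j then 0 else 1
    | 2 => if i == j then 0
           else if val i == 0 then Complex 0 (-1) else Complex 0 1
    | _ => if i == j then (if val i == 0 then 1 else -1) else 0
    end.

Definition pauli2 (p : 'I_4 * 'I_4) : 'M[C]_4 := pauli1 p.1 *t pauli1 p.2.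

Definition pauli_id : 'I_4 * 'I_4 := (0, 0).

Definition max_comm_class (S : {set 'I_4 * 'I_4}) : Prop :=
  [/\ #|S| = 3%N, pauli_id \notin S &
      forall p q, p \in S -> q \in S -> pauli2 p *m pauli2 q = pauli2 q *m pauli2 p].

Definition cdot (u v : 'cV[C]_4) : C := \sum_(k < 4) conjc (u k 0) * v k 0.

Definition sqmod (z : C) : R := complex.Re z ^+ 2 + complex.Im z ^+ 2.

Definition eigvec (A : 'M[C]_4) (v : 'cV[C]_4) : Prop :=
  exists lam : C, A *m v = lam *: v.

Definition common_eigenbasis (S : {set 'I_4 * 'I_4}) (B : 'I_4 -> 'cV[C]_4) : Prop :=
  (forall j k, cdot (B j) (B k) = (j == k)%:R) /\
  (forall p j, p \in S -> eigvec (pauli2 p) (B j)).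

Definition H2 (B : 'I_4 -> 'cV[C]_4) (psi : 'cV[C]_4) : R :=
  - (ln (\sum_(j < 4) sqmod (cdot (B j) psi) ^+ 2) / ln 2).

End Defs.

From HB Require Import structures.
From mathcomp Require Import all_boot all_order all_algebra.
From mathcomp Require Import reals exp.
From mathcomp Require Import complex mxtens.
From mathcomp Require Import ring lra.
Set Implicit Arguments. Unset Strict Implicit. Unset Printing Implicit Defensive.
Import Order.TTheory GRing.Theory Num.Theory.
Local Open Scope complex_scope.
Local Open Scope ring_scope.

(* Let p be the element of S in the class C_i = {p, a, c} and q one in another
   class. Then q commutes with p but, lying outside the maximal class C_i,
   anticommutes with a or c, say a. In B_i the operators p, a and pa are diagonal,
   with sign vectors u, v and uv that are balanced because non-identity Paulis
   are traceless. As psi is an eigenvector of p (eigenvalue m) and of q, which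
   anticommutes with a and pa, the probabilities P_j = |<b_j|psi>|^2 satisfy
   sum P = 1, sum uP = m and sum vP = sum uvP = 0. Since 1, u, v, uv form an
   orthogonal basis of R^4, P = (1 + m u) / 4, whence sum P_j^2 = 1/2 and
   H_2(B_i || psi) = 1 for each i. *)

Section SignVectors.
Variables (R : realFieldType) (I : finType) (u v : I -> R).
Hypotheses (u_sign : forall i, u i ^+ 2 = 1) (v_sign : forall i, v i ^+ 2 = 1).
Hypotheses (sum_u : \sum_i u i = 0) (sum_v : \sum_i v i = 0)
  (sum_uv : \sum_i u i * v i = 0).
Hypothesis card_I : #|I| = 4%N.

Let pattern j k := (1 + u j * u k) * (1 + v j * v k).

Lemma sum_sign_pattern j : \sum_k pattern j k = 4.
Proof.
transitivity (\sum_(k : I) 1 + u j * \sum_k u k + v j * \sum_k v k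
              + u j * v j * \sum_k u k * v k).
  rewrite !mulr_sumr -!big_split /=; apply: eq_bigr => k _; rewrite /pattern; ring.
by rewrite sum_u sum_v sum_uv sumr_const card_I !mulr0 !addr0.
Qed.

Lemma sign_pattern_ge0 j k : 0 <= pattern j k.
Proof.
have add1_ge0 (x : R) : x ^+ 2 = 1 -> 0 <= 1 + x by move=> x2; nra.
by rewrite mulr_ge0 // add1_ge0 // exprMn ?u_sign ?v_sign mulr1.
Qed.

(* The pattern is 4 when the sign pairs (u, v) at j and k agree and 0 otherwise;
   a repeated pair would push the sum of the nonnegative patterns above 4. *)
Lemma sign_pattern_delta j k : pattern j k = 4 * (j == k)%:R.
Proof.
case: eqVneq => [<- | njk].
  by rewrite /pattern -!expr2 u_sign v_sign mulr1; ring.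
rewrite mulr0; apply/eqP; rewrite eq_le sign_pattern_ge0 andbT.
have : pattern j j + pattern j k <= \sum_l pattern j l.
  rewrite (bigD1 j) //= lerD2l (bigD1 k) 1?eq_sym //= lerDl.
  by apply: sumr_ge0 => l _; apply: sign_pattern_ge0.
by rewrite sum_sign_pattern /pattern -!expr2 u_sign v_sign; lra.
Qed.

Lemma sign_pattern_expand (P : I -> R) j :
  4 * P j = \sum_k P k + u j * \sum_k u k * P k + v j * \sum_k v k * P k
            + u j * v j * \sum_k u k * v k * P k.
Proof.
transitivity (\sum_k P k * pattern j k).
  rewrite (bigD1 j) //= big1 => [|k nkj]; last first.
    by rewrite sign_pattern_delta eq_sym (negbTE nkj) !mulr0.
  by rewrite sign_pattern_delta eqxx addr0 mulr1 mulrC.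
rewrite !mulr_sumr -!big_split /=; apply: eq_bigr => k _; rewrite /pattern; ring.
Qed.

Lemma sign_collision (P : I -> R) (m : R) : m ^+ 2 = 1 ->
  \sum_k P k = 1 -> \sum_k u k * P k = m -> \sum_k v k * P k = 0 ->
  \sum_k u k * v k * P k = 0 -> \sum_k P k ^+ 2 = 1 / 2.
Proof.
move=> m2 sP suP svP suvP.
have PE k : P k = (1 + u k * m) / 4.
  have := sign_pattern_expand P k; rewrite sP suP svP suvP !mulr0 !addr0.
  by move=> <-; field.
transitivity ((\sum_(k : I) 1 + m ^+ 2 * \sum_k u k ^+ 2 + 2 * m * \sum_k u k) / 16).
  by rewrite !mulr_sumr -!big_split mulr_suml /=; apply: eq_bigr => k _; rewrite PE; field.
under [X in m ^+ 2 * X]eq_bigr do rewrite u_sign.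
by rewrite sum_u sumr_const card_I m2; field.
Qed.

End SignVectors.

(* Two single-qubit Paulis anticommute iff both differ from I and from each
   other; a tensor product collects one sign per anticommuting factor. *)
Definition pauli1_anti (a b : 'I_4) : bool :=
  [&& val a != 0%N, val b != 0%N & a != b].

Definition pauli_anti (p q : 'I_4 * 'I_4) : bool :=
  pauli1_anti p.1 q.1 (+) pauli1_anti p.2 q.2.

Lemma pauli_antiC p q : pauli_anti p q = pauli_anti q p.
Proof.
have anti1C a b : pauli1_anti a b = pauli1_anti b a.
  by rewrite /pauli1_anti [b == a]eq_sym andbCA.
by rewrite /pauli_anti anti1C [pauli1_anti p.2 _]anti1C.
Qed.

Section TensorProduct.
Variable K : comPzRingType.

Lemma tensmx11 m n : (1 : 'M[K]_m) *t (1 : 'M[K]_n) = 1.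
Proof.
apply/matrixP => i j; case: (mxtens_indexP i) => i1 i2; case: (mxtens_indexP j) => j1 j2.
rewrite tensmxE !mxE (inj_eq (can_inj (@mxtens_indexK _ _))) xpair_eqE.
by case: (i1 == j1); case: (i2 == j2); rewrite ?mulr1 ?mulr0.
Qed.

Lemma tensmxZ m n p q (a b : K) (A : 'M[K]_(m, n)) (B : 'M[K]_(p, q)) :
  (a *: A) *t (b *: B) = (a * b) *: (A *t B).
Proof. by apply/matrixP => i j; rewrite !mxE mulrACA. Qed.

Lemma tensmx_entry m n p q (A : 'M[K]_(m, n)) (B : 'M[K]_(p, q)) i j :
  (A *t B) i j = A (mxtens_unindex i).1 (mxtens_unindex j).1
                 * B (mxtens_unindex i).2 (mxtens_unindex j).2.
Proof. by rewrite mxE. Qed.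

Lemma mxtrace_tens m n (A : 'M[K]_m) (B : 'M[K]_n) : \tr (A *t B) = \tr A * \tr B.
Proof.
rewrite /mxtrace (reindex (@mxtens_index m n)); last first.
  by exists (@mxtens_unindex m n) => x _; [apply: mxtens_indexK | apply: mxtens_unindexK].
under eq_bigr => ij _ do rewrite mxE mxtens_indexK.
rewrite big_distrl /=; under [RHS]eq_bigr => i _ do rewrite big_distrr /=.
by rewrite pair_big.
Qed.

End TensorProduct.

Section Pauli.
Variable R : realType.
Local Notation C := (complex R).
Local Notation pauli2 := (pauli2 R).

Lemma complex_negi : Complex (0 : R) (-1) = - Complex 0 1.
Proof. by simpc. Qed.

Lemma complex_i_mul_i : Complex (0 : R) 1 * Complex 0 1 = -1.
Proof. by simpc. Qed.

Ltac pauli_entries :=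
  rewrite ?(mul0r, mulr0, mul1r, mulr1, mulN1r, mulrN1, mulrN, mulNr, opprK,
            add0r, addr0, complex_i_mul_i, oppr0, addNr, addrN) //.

Lemma pauli1_mul_swap (a b : 'I_4) : pauli1 R a *m pauli1 R b =
  (if pauli1_anti a b then -1 else 1) *: (pauli1 R b *m pauli1 R a).
Proof.
apply/matrixP => i j; rewrite !mxE !big_ord_recr !big_ord0 /= !mxE complex_negi.
case: a => [[|[|[|[|a]]]] Ha] //; case: b => [[|[|[|[|b]]]] Hb] //;
  case: i => [[|[|i]] Hi] //; case: j => [[|[|j]] Hj] //=; pauli_entries.
Qed.

Lemma pauli1_sqr (a : 'I_4) : pauli1 R a *m pauli1 R a = 1.
Proof.
apply/matrixP => i j; rewrite !mxE !big_ord_recr !big_ord0 /= !mxE complex_negi.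
case: a => [[|[|[|[|a]]]] Ha] //; case: i => [[|[|i]] Hi] //;
  case: j => [[|[|j]] Hj] //=; pauli_entries.
Qed.

Lemma pauli1_id : pauli1 R 0 = 1.
Proof.
by apply/matrixP => i j; rewrite !mxE; case: i => [[|[|?]] ?]; case: j => [[|[|?]] ?].
Qed.

Lemma pauli1_adj (a : 'I_4) i j : (pauli1 R a i j)^*%C = pauli1 R a j i.
Proof.
rewrite !mxE; case: a => [[|[|[|[|a]]]] Ha] //; case: i => [[|[|i]] Hi] //;
  case: j => [[|[|j]] Hj] //=; simpc; reflexivity.
Qed.

Lemma pauli1_tr_mul (a b : 'I_4) : a != b -> \tr (pauli1 R a *m pauli1 R b) = 0.
Proof.
rewrite /mxtrace !big_ord_recr !big_ord0 /= !mxE !big_ord_recr !big_ord0 /= !mxE complex_negi.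
by case: a => [[|[|[|[|a]]]] Ha] //; case: b => [[|[|[|[|b]]]] Hb] //= _; pauli_entries.
Qed.

Lemma pauli_mul p q : pauli2 p *m pauli2 q =
  (pauli1 R p.1 *m pauli1 R q.1) *t (pauli1 R p.2 *m pauli1 R q.2).
Proof. exact: (@tensmx_mul C 2 2 2 2 2 2). Qed.

Lemma pauli_sqr p : pauli2 p *m pauli2 p = 1.
Proof. by rewrite pauli_mul !pauli1_sqr tensmx11. Qed.

Lemma pauli_idE : pauli2 pauli_id = 1.
Proof. by rewrite /pauli2 /= pauli1_id tensmx11. Qed.

Lemma pauli_mul_swap p q : pauli2 p *m pauli2 q =
  (if pauli_anti p q then -1 else 1) *: (pauli2 q *m pauli2 p).
Proof.
rewrite !pauli_mul (pauli1_mul_swap p.1) (pauli1_mul_swap p.2) tensmxZ; congr (_ *: _).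
by rewrite /pauli_anti; case: (pauli1_anti p.1 q.1); case: (pauli1_anti p.2 q.2);
  rewrite /= ?mulrNN ?mulr1 ?mul1r.
Qed.

Lemma pauli_adj p i j : (pauli2 p i j)^*%C = pauli2 p j i.
Proof. by rewrite /pauli2 !(@tensmx_entry _ 2 2 2 2) rmorphM /= !pauli1_adj. Qed.

Lemma pauli_tr_mul p q : p != q -> \tr (pauli2 p *m pauli2 q) = 0.
Proof.
case: p q => [p1 p2] [q1 q2]; rewrite xpair_eqE negb_and pauli_mul (@mxtrace_tens _ 2 2) /=.
by case/orP => /pauli1_tr_mul ->; rewrite ?mul0r ?mulr0.
Qed.

Lemma pauli_tr p : p != pauli_id -> \tr (pauli2 p) = 0.
Proof. by move=> /pauli_tr_mul; rewrite pauli_idE mulmx1. Qed.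

Lemma pauli_comm_anti p q :
  pauli2 p *m pauli2 q = pauli2 q *m pauli2 p -> ~~ pauli_anti p q.
Proof.
rewrite pauli_mul_swap; case: (pauli_anti p q) => //= hpq.
have qp0 : pauli2 q *m pauli2 p = 0.
  have : (2%:R : C) *: (pauli2 q *m pauli2 p) == 0.
    by rewrite scaler_nat mulr2n -{1}hpq scaleN1r addNr.
  by rewrite scalemx_eq0 pnatr_eq0 => /eqP.
have p0 : pauli2 p = 0.
  have -> : pauli2 p = pauli2 q *m (pauli2 q *m pauli2 p) by rewrite mulmxA pauli_sqr mul1mx.
  by rewrite qp0 mulmx0.
have := pauli_sqr p; rewrite p0 mul0mx.
by move/matrixP/(_ 0 0); rewrite !mxE eqxx => /eqP; rewrite eq_sym oner_eq0.
Qed.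

End Pauli.

Section InnerProduct.
Variable R : realType.
Local Notation C := (complex R).
Implicit Types (u v w : 'cV[C]_4) (c : C).

Lemma cdotZl u v c : cdot (c *: u) v = c^*%C * cdot u v.
Proof. by rewrite /cdot big_distrr; apply: eq_bigr => k _; rewrite mxE rmorphM /= mulrA. Qed.

Lemma cdotZr u v c : cdot u (c *: v) = c * cdot u v.
Proof. by rewrite /cdot big_distrr; apply: eq_bigr => k _; rewrite mxE mulrCA. Qed.

Lemma cdotNr u v : cdot u (- v) = - cdot u v.
Proof. by rewrite -scaleN1r cdotZr mulN1r. Qed.

Lemma cdot_adj (A : 'M[C]_4) (A_adj : forall i j, (A i j)^*%C = A j i) u v :
  cdot u (A *m v) = cdot (A *m u) v.
Proof.
rewrite /cdot.
under eq_bigr => k _ do rewrite mxE big_distrr.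
under [RHS]eq_bigr => k _ do rewrite mxE rmorph_sum big_distrl.
rewrite exchange_big; apply: eq_bigr => k _; apply: eq_bigr => l _ /=.
by rewrite rmorphM /= A_adj mulrCA mulrA.
Qed.

Lemma sqmodE (z : C) : z^*%C * z = (sqmod z)%:C.
Proof. by case: z => a b; rewrite /sqmod /=; simpc; congr Complex; ring. Qed.

Variable B : 'I_4 -> 'cV[C]_4.
Hypothesis B_orthonormal : forall j k, cdot (B j) (B k) = (j == k)%:R.

Lemma basis_complete k l : \sum_j B j k 0 * (B j l 0)^*%C = (k == l)%:R.
Proof.
pose M := \matrix_(k, j) B j k 0 : 'M[C]_4.
pose Madj := \matrix_(j, k) (B j k 0)^*%C : 'M[C]_4.
have MadjM : Madj *m M = 1%:M.
  by apply/matrixP => j j'; rewrite !mxE -B_orthonormal; apply: eq_bigr => m _; rewrite !mxE.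
have /matrixP/(_ k l) := mulmx1C MadjM; rewrite !mxE => <-.
by apply: eq_bigr => j _; rewrite !mxE.
Qed.

Lemma sum_delta (F : 'I_4 -> C) k : \sum_l F l * (k == l)%:R = F k.
Proof.
rewrite (bigD1 k) //= eqxx mulr1 big1 ?addr0 // => l /negbTE.
by rewrite eq_sym => ->; rewrite mulr0.
Qed.

Lemma parseval u v : cdot u v = \sum_j (cdot (B j) u)^*%C * cdot (B j) v.
Proof.
transitivity (\sum_k \sum_l (u k 0)^*%C * v l 0 * \sum_j B j k 0 * (B j l 0)^*%C).
  by apply: eq_bigr => k _; under eq_bigr => l _ do rewrite basis_complete; rewrite sum_delta.
rewrite /cdot.
under [RHS]eq_bigr => j _ do rewrite rmorph_sum big_distrl.
under [RHS]eq_bigr => j _ do under eq_bigr => k _ do rewrite big_distrr.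
rewrite [RHS]exchange_big; apply: eq_bigr => k _ /=.
rewrite [RHS]exchange_big; apply: eq_bigr => l _ /=.
rewrite big_distrr; apply: eq_bigr => j _ /=.
rewrite rmorphM /= conjcK; ring.
Qed.

Lemma mxtrace_basis (A : 'M[C]_4) : \tr A = \sum_j cdot (B j) (A *m B j).
Proof.
transitivity (\sum_k \sum_l A k l * \sum_j B j l 0 * (B j k 0)^*%C).
  rewrite /mxtrace; apply: eq_bigr => k _; under eq_bigr => l _ do rewrite basis_complete.
  by rewrite -(sum_delta (A k) k); apply: eq_bigr => l _; rewrite eq_sym.
rewrite /cdot.
under [RHS]eq_bigr => j _ do under eq_bigr => k _ do rewrite mxE big_distrr.
rewrite [RHS]exchange_big; apply: eq_bigr => k _ /=.
rewrite [RHS]exchange_big; apply: eq_bigr => l _ /=.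
rewrite big_distrr; apply: eq_bigr => j _ /=; ring.
Qed.

Section DiagonalInBasis.
Variables (A : 'M[C]_4) (lam : 'I_4 -> R).
Hypothesis A_diag : forall j w, cdot (B j) (A *m w) = (lam j)%:C * cdot (B j) w.

Lemma cdot_diag w : cdot w (A *m w) = (\sum_j lam j * sqmod (cdot (B j) w))%:C.
Proof.
rewrite parseval rmorph_sum; apply: eq_bigr => j _.
by rewrite A_diag mulrCA sqmodE rmorphM.
Qed.

Lemma mxtrace_diag : \tr A = (\sum_j lam j)%:C.
Proof.
rewrite mxtrace_basis rmorph_sum; apply: eq_bigr => j _.
by rewrite A_diag B_orthonormal eqxx mulr1.
Qed.

End DiagonalInBasis.

End InnerProduct.

Section PauliEigenvectors.
Variable R : realType.
Local Notation C := (complex R).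
Local Notation pauli2 := (pauli2 R).
Implicit Types (v w psi : 'cV[C]_4).

Definition pauli_expect p v : R := complex.Re (cdot v (pauli2 p *m v)).

Lemma pauli_eigvecE p v : cdot v v = 1 -> eigvec (pauli2 p) v ->
  pauli2 p *m v = (pauli_expect p v)%:C *: v /\ pauli_expect p v ^+ 2 = 1.
Proof.
move=> v1 [lam plam].
have lam2 : lam ^+ 2 = 1.
  have <- : cdot v (pauli2 p *m (pauli2 p *m v)) = lam ^+ 2.
    by rewrite plam -scalemxAr plam scalerA cdotZr v1 mulr1 expr2.
  by rewrite mulmxA pauli_sqr mul1mx v1.
have lamE : lam = (pauli_expect p v)%:C.
  rewrite /pauli_expect plam cdotZr v1 mulr1.
  by move/eqP: lam2; rewrite sqrf_eq1 => /orP[] /eqP ->; simpc.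
rewrite -lamE; split=> //; move: lam2; rewrite lamE -rmorphXn -(rmorph1 (real_complex R)).
exact: complexI.
Qed.

Lemma cdot_pauli_eigvec p v (lam : R) : pauli2 p *m v = lam%:C *: v ->
  forall w, cdot v (pauli2 p *m w) = lam%:C * cdot v w.
Proof. by move=> pv w; rewrite (cdot_adj (pauli_adj R p)) pv cdotZl conjc_real. Qed.

Lemma cdot_anticomm_eigvec (X : 'M[C]_4) q psi :
  cdot psi psi = 1 -> eigvec (pauli2 q) psi ->
  X *m pauli2 q = - (pauli2 q *m X) -> cdot psi (X *m psi) = 0.
Proof.
move=> psi1 /(pauli_eigvecE psi1) [qpsi s2] XQ.
set s := pauli_expect q psi in qpsi s2.
set z := cdot psi (X *m psi).
have : s%:C * z = - (s%:C * z).
  transitivity (cdot psi (X *m (pauli2 q *m psi))); first by rewrite qpsi -scalemxAr cdotZr.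
  by rewrite mulmxA XQ mulNmx cdotNr -mulmxA (cdot_pauli_eigvec qpsi).
move/eqP; rewrite -addr_eq0 -mulr2n mulrn_eq0 /= mulf_eq0 => /orP[/eqP s0 | /eqP //].
have : s = 0 by apply: complexI; rewrite s0.
by move: s2 => /[swap] ->; rewrite expr0n /= => /eqP; rewrite eq_sym oner_eq0.
Qed.

Lemma collision_half (B : 'I_4 -> 'cV[C]_4) p a q (psi : 'cV[C]_4) :
  (forall j k, cdot (B j) (B k) = (j == k)%:R) ->
  (forall j, eigvec (pauli2 p) (B j)) -> (forall j, eigvec (pauli2 a) (B j)) ->
  p != pauli_id -> a != pauli_id -> p != a ->
  cdot psi psi = 1 -> eigvec (pauli2 p) psi -> eigvec (pauli2 q) psi ->
  pauli_anti a q -> ~~ pauli_anti p q ->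
  \sum_j sqmod (cdot (B j) psi) ^+ 2 = 1 / 2.
Proof.
move=> B_on Bp Ba p_id a_id pa psi1 ppsi qpsi aq pq.
have B1 j : cdot (B j) (B j) = 1 by rewrite B_on eqxx.
pose u j := pauli_expect p (B j); pose v j := pauli_expect a (B j).
have uE j := pauli_eigvecE (B1 j) (Bp j).
have vE j := pauli_eigvecE (B1 j) (Ba j).
have diag_p j w : cdot (B j) (pauli2 p *m w) = (u j)%:C * cdot (B j) w.
  exact: cdot_pauli_eigvec (uE j).1 w.
have diag_a j w : cdot (B j) (pauli2 a *m w) = (v j)%:C * cdot (B j) w.
  exact: cdot_pauli_eigvec (vE j).1 w.
have diag_pa j w :
    cdot (B j) ((pauli2 p *m pauli2 a) *m w) = (u j * v j)%:C * cdot (B j) w.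
  by rewrite -mulmxA diag_p diag_a rmorphM mulrA.
have aQ : pauli2 a *m pauli2 q = - (pauli2 q *m pauli2 a).
  by rewrite pauli_mul_swap aq scaleN1r.
have paQ : (pauli2 p *m pauli2 a) *m pauli2 q
           = - (pauli2 q *m (pauli2 p *m pauli2 a)).
  rewrite -mulmxA aQ mulmxN !mulmxA.
  by rewrite [pauli2 p *m pauli2 q]pauli_mul_swap (negbTE pq) scale1r.
have [ppsi_m m2] := pauli_eigvecE psi1 ppsi.
apply: (@sign_collision _ _ u v _ _ _ _ _ _ _ _ m2).
- by move=> j; case: (uE j).
- by move=> j; case: (vE j).
- by apply: complexI; rewrite -(mxtrace_diag B_on diag_p) pauli_tr.
- by apply: complexI; rewrite -(mxtrace_diag B_on diag_a) pauli_tr.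
- by apply: complexI; rewrite -(mxtrace_diag B_on diag_pa) pauli_tr_mul.
- exact: card_ord.
- apply: complexI; rewrite rmorph_sum rmorph1 -psi1 (parseval B_on).
  by apply: eq_bigr => j _; rewrite sqmodE.
- by apply: complexI; rewrite -(cdot_diag B_on diag_p) ppsi_m cdotZr psi1 mulr1.
- by apply: complexI; rewrite -(cdot_diag B_on diag_a) (cdot_anticomm_eigvec psi1 qpsi aQ).
- by apply: complexI; rewrite -(cdot_diag B_on diag_pa) (cdot_anticomm_eigvec psi1 qpsi paQ).
Qed.

End PauliEigenvectors.

Definition commuting_triple (p a c : 'I_4 * 'I_4) : bool :=
  [&& p != pauli_id, a != pauli_id, c != pauli_id, p != a, p != c, a != c,
      ~~ pauli_anti p a, ~~ pauli_anti p c & ~~ pauli_anti a c].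

(* Unlike [ord_enum 4], this literal list is evaluated by [vm_compute]. *)
Definition ord4_enum : seq 'I_4 :=
  [:: @Ordinal 4 0 isT; @Ordinal 4 1 isT; @Ordinal 4 2 isT; @Ordinal 4 3 isT].

Definition pauli_labels : seq ('I_4 * 'I_4) :=
  [seq (x, y) | x <- ord4_enum, y <- ord4_enum].

Lemma mem_pauli_labels p : p \in pauli_labels.
Proof.
have mem_ord4 x : x \in ord4_enum by case: x => [[|[|[|[|?]]]] ?].
by case: p => x y; apply: allpairs_f.
Qed.

(* A commuting triple is {p, a, pa} up to phases, so the only labels commuting
   with both p and a are those of the triple; checked by enumeration. *)
Lemma commuting_triple_anti p a c q : commuting_triple p a c ->
  q != pauli_id -> q \notin [:: p; a; c] -> ~~ pauli_anti q p ->
  pauli_anti q a || pauli_anti q c.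
Proof.
have : all (fun p => all (fun a => all (fun c => all (fun q =>
    [&& commuting_triple p a c, q != pauli_id, q \notin [:: p; a; c]
      & ~~ pauli_anti q p] ==> pauli_anti q a || pauli_anti q c)
    pauli_labels) pauli_labels) pauli_labels) pauli_labels.
  by vm_compute.
move=> /allP/(_ p (mem_pauli_labels p))/allP/(_ a (mem_pauli_labels a)).
move=> /allP/(_ c (mem_pauli_labels c))/allP/(_ q (mem_pauli_labels q))/implyP.
by move=> check pac q_id q_pac qp; apply: check; rewrite pac q_id q_pac qp.
Qed.

Section MaximalClasses.
Variable R : realType.
Local Notation C := (complex R).
Local Notation pauli2 := (pauli2 R).

Lemma max_comm_class_triple (Ci : {set 'I_4 * 'I_4}) p :
  max_comm_class R Ci -> p \in Ci ->
  exists a c, [/\ commuting_triple p a c, a \in Ci & c \in Ci].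
Proof.
move=> [card3 id_notin comm] pCi.
have /cards2P [a [c [ac Cip]]] : #|Ci :\ p| == 2%N.
  by move: card3; rewrite (cardsD1 p) pCi add1n => -[->].
have : a \in Ci :\ p /\ c \in Ci :\ p by rewrite Cip !inE !eqxx orbT.
rewrite !inE => -[/andP[ap aCi] /andP[cp cCi]].
have not_id x : x \in Ci -> x != pauli_id by move=> xCi; apply: contraNneq id_notin => <-.
have comm_anti x y : x \in Ci -> y \in Ci -> ~~ pauli_anti x y.
  by move=> xCi yCi; apply/pauli_comm_anti/comm.
exists a, c; split=> //.
by rewrite /commuting_triple !not_id // ![p == _]eq_sym ap cp ac !comm_anti.
Qed.

Lemma H2_collision_half (B : 'I_4 -> 'cV[C]_4) psi :
  \sum_j sqmod (cdot (B j) psi) ^+ 2 = 1 / 2 -> H2 B psi = 1.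
Proof.
move=> half; rewrite /H2 half div1r lnV ?posrE // mulNr opprK divff //.
by rewrite gt_eqF // ln_gt0 // ltr1n.
Qed.

Lemma max_comm_class_H2 (Ci Cj : {set 'I_4 * 'I_4}) (B : 'I_4 -> 'cV[C]_4) p q psi :
  max_comm_class R Ci -> max_comm_class R Cj -> [disjoint Ci & Cj] ->
  p \in Ci -> q \in Cj -> common_eigenbasis Ci B -> cdot psi psi = 1 ->
  eigvec (pauli2 p) psi -> eigvec (pauli2 q) psi ->
  pauli2 p *m pauli2 q = pauli2 q *m pauli2 p -> H2 B psi = 1.
Proof.
move=> maxCi [_ id_notin _] dij pCi qCj [B_on B_eig] psi1 ppsi qpsi pq.
have [a [c [pac aCi cCi]]] := max_comm_class_triple maxCi pCi.
have q_notin : q \notin [:: p; a; c].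
  have qCi : (q \in Ci) = false by apply: (disjointFl dij).
  by apply: contraFN qCi; rewrite !inE => /or3P[] /eqP ->.
have q_id : q != pauli_id by apply: contraNneq id_notin => <-.
have qp : ~~ pauli_anti q p by rewrite pauli_antiC; exact: pauli_comm_anti pq.
have /and4P[p_id a_id c_id /and3P[pa pc _]] := pac.
have half x : x \in Ci -> x != p -> x != pauli_id -> pauli_anti q x ->
    \sum_j sqmod (cdot (B j) psi) ^+ 2 = 1 / 2.
  move=> xCi xp x_id; rewrite pauli_antiC => xq; rewrite pauli_antiC in qp.
  apply: (collision_half B_on (B_eig p ^~ pCi) (B_eig x ^~ xCi) p_id x_id _ psi1 ppsi qpsi xq qp).
  by rewrite eq_sym.
apply: H2_collision_half.
by case/orP: (commuting_triple_anti pac q_id q_notin qp) => [qa | qc];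
  [apply: (half a) | apply: (half c)]; rewrite // eq_sym.
Qed.

End MaximalClasses.

Theorem theorem6 (R : realType) (C1 C2 C3 S : {set 'I_4 * 'I_4})
    (B1 B2 B3 : 'I_4 -> 'cV[complex R]_4) (psi : 'cV[complex R]_4) :
  max_comm_class R C1 -> max_comm_class R C2 -> max_comm_class R C3 ->
  [disjoint C1 & C2] -> [disjoint C1 & C3] -> [disjoint C2 & C3] ->
  max_comm_class R S ->
  (exists p1 p2 p3, [/\ p1 \in C1, p2 \in C2, p3 \in C3 & S = [set p1; p2; p3]]) ->
  common_eigenbasis C1 B1 -> common_eigenbasis C2 B2 -> common_eigenbasis C3 B3 ->
  cdot psi psi = 1 ->
  (forall p, p \in S -> eigvec (pauli2 R p) psi) ->
  (H2 B1 psi + H2 B2 psi + H2 B3 psi) / 3 = 1.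
Proof.
move=> max1 max2 max3 d12 d13 _ [_ _ S_comm] [p1 [p2 [p3 [p1C1 p2C2 p3C3 S_def]]]].
move=> B1eig B2eig B3eig psi1 psi_eig.
have p1S : p1 \in S by rewrite S_def !inE eqxx.
have p2S : p2 \in S by rewrite S_def !inE eqxx orbT.
have p3S : p3 \in S by rewrite S_def !inE eqxx !orbT.
rewrite (max_comm_class_H2 max1 max2 d12 p1C1 p2C2 B1eig psi1 (psi_eig _ p1S)
          (psi_eig _ p2S) (S_comm _ _ p1S p2S)).
rewrite (max_comm_class_H2 max2 max1 _ p2C2 p1C1 B2eig psi1 (psi_eig _ p2S)
          (psi_eig _ p1S) (S_comm _ _ p2S p1S)); last by rewrite disjoint_sym.
rewrite (max_comm_class_H2 max3 max1 _ p3C3 p1C1 B3eig psi1 (psi_eig _ p3S)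
          (psi_eig _ p1S) (S_comm _ _ p3S p1S)); last by rewrite disjoint_sym.
lra.
Qed.
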